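(* For the private information delivery problem with $K$ messages, $N \geq \lceil \frac{K}{M} \rceil$ servers and $M$ messages per server, the capacity satisfies \[ 1/\lceil \tfrac{K}{M} \rceil \leq C \leq M/K. \]
   Context: Private information delivery (PID) problem: there are $K$ independent messages $W_1,\dots,W_K$, each consisting of $L$ i.i.d. uniform symbols from a finite field $\mathbb{F}_p$ (so $H(W_k)=L$ in $p$-ary units and the messages are mutually independent). There are $N$ servers; server $n$ stores $S_n = W_{\mathcal{S}_n}$ with $\mathcal{S}_n \subset [1:K]$, $|\mathcal{S}_n| = M$ (replicated storage, no coding or splitting of messages; the choice of the sets $\mathcal{S}_n$ may be designed). The servers share a common random variable $Z$ independent of the messages (any amount of common randomness is allowed). The servers privately choose $\theta \in [1:K]$ and wish to deliver $W_\theta$ to a user without revealing $\theta$. To deliver $W_k$, server $n$ sends an answer $A_n^{[k]}$ that is a deterministic function of $(S_n, Z)$. Correctness: $H(W_k \mid A_1^{[k]},\dots,A_N^{[k]}) = 0$ (zero-error decoding). Privacy: for all $k \in [1:K]$, $(A_1^{[1]},\dots,A_N^{[1]}, W_1) \sim (A_1^{[k]},\dots,A_N^{[k]}, W_k)$ (identically distributed). If $D_n$ is the number of symbols sent by server $n$, the rate is $R = L/\sum_{n=1}^N D_n$. A rate is achievable if there is a PID scheme of rate at least that value with zero-error decoding, and the capacity $C$ is the supremum of achievable rates over all storage designs $S_1,\dots,S_N$ and all PID schemes. *)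

From HB Require Import structures.
From mathcomp Require Import all_boot all_order all_algebra.
From mathcomp Require Import boolp classical_sets reals.
Set Implicit Arguments. Unset Strict Implicit. Unset Printing Implicit Defensive.
Import Order.TTheory GRing.Theory Num.Theory.
Local Open Scope ring_scope.
Local Open Scope classical_set_scope.

(* ceil(K / M) for M > 0 *)
Definition ceildiv (K M : nat) : nat := ((K + M).-1 %/ M)%N.

Definition msgs (p K L : nat) := {ffun 'I_K -> 'rV['F_p]_L}.

(* A PID scheme of the given parameters:
   S n  : set of indices of the messages stored by server n (|S n| = M)
   ZT,PZ: common randomness Z with distribution PZ on the finite set ZT
   D n  : number of F_p-symbols sent by server n
   ans k n W z : answer A_n^[k] of server n for delivering W_k, when the
                 messages are W and the common randomness is z. *)
Definition is_PID_scheme (R : realType) (p K N M L : nat)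
  (S : 'I_N -> {set 'I_K}) (ZT : finType) (PZ : ZT -> R) (D : 'I_N -> nat)
  (ans : forall (k : 'I_K) (n : 'I_N), msgs p K L -> ZT -> 'rV['F_p]_(D n)) :
  Prop :=
  (forall n, #|S n| = M) /\
  (* Z is a random variable with distribution PZ, independent of W
     (the joint law is PZ z * uniform(W), see [joint_prob]) *)
  (forall z, 0 <= PZ z) /\ (\sum_z PZ z = 1) /\
  (* A_n^[k] is a deterministic function of (S_n, Z) *)
  (forall k n (W W' : msgs p K L) z,
      (forall j, j \in S n -> W j = W' j) -> ans k n W z = ans k n W' z) /\
  (* correctness: zero-error decoding, i.e. W_k is a function of
     (A_1^[k],...,A_N^[k]) on the support of (W, Z); all W have positive
     probability (uniform messages) *)
  (forall k, exists dec : (forall n : 'I_N, 'rV['F_p]_(D n)) -> 'rV['F_p]_L,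
      forall (W : msgs p K L) z, 0 < PZ z -> dec (fun n => ans k n W z) = W k) /\
  (* privacy: (A_1^[k],...,A_N^[k], W_k) has the same distribution for all k *)
  (forall (k k' : 'I_K) (a : forall n : 'I_N, 'rV['F_p]_(D n)) (w : 'rV['F_p]_L),
      \sum_(W : msgs p K L) \sum_(z : ZT)
         (PZ z / (p ^ (K * L))%:R) *
           ([forall n, ans k n W z == a n] && (W k == w))%:R
    = \sum_(W : msgs p K L) \sum_(z : ZT)
         (PZ z / (p ^ (K * L))%:R) *
           ([forall n, ans k' n W z == a n] && (W k' == w))%:R).

Definition PID_achievable (R : realType) (p K N M : nat) (r : R) : Prop :=
  exists (L : nat) (S : 'I_N -> {set 'I_K}) (ZT : finType) (PZ : ZT -> R)
         (D : 'I_N -> nat)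
         (ans : forall (k : 'I_K) (n : 'I_N), msgs p K L -> ZT -> 'rV['F_p]_(D n)),
    (0 < L)%N /\ @is_PID_scheme R p K N M L S ZT PZ D ans /\
    r <= (L%:R / (\sum_n D n)%:R).

Definition PID_capacity (R : realType) (p K N M : nat) : R :=
  sup [set r : R | PID_achievable p K N M r].

From HB Require Import structures.
From mathcomp Require Import all_boot all_order all_algebra.
From mathcomp Require Import boolp classical_sets reals.
From mathcomp Require Import perm zify ring.
Set Implicit Arguments. Unset Strict Implicit. Unset Printing Implicit Defensive.
Import Order.TTheory GRing.Theory Num.Theory.
Local Open Scope ring_scope.

(** Converse: privacy forces the support of each server's answer to be the
  same whichever message is delivered.  Servers not storing [W_k] answer
  independently of it, so for a fixed value of the common randomness the
  servers storing [W_k] must encode it injectively: [p ^ L] is at most the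
  product of their support sizes.  Multiplying over [k], each server is
  counted [M] times, so [p ^ (K L) <= p ^ (M * sum_n D_n)].
  Achievability: with [L = 1], split the messages into [ceil (K / M)] blocks
  of [M]; server [n] stores block [n] and sends [z_n + W_k] or [z_n]
  according as [W_k] is in its block, where [z] is uniform among vectors of
  zero sum, and the user adds up the answers.  Permuting [W_k] and [W_k'] and
  moving [W_k'] within the pad from the block of [k'] to the block of [k] is
  a law-preserving bijection that turns the answers for [k'] into those for
  [k], whence privacy. *)

Lemma leq_card_prod_inj (T I : finType) (U : I -> finType) (A : forall i, {set U i})
    (g : T -> {dffun forall i, U i}) :
  injective g -> (forall x i, g x i \in A i) -> (#|T| <= \prod_i #|A i|)%N.
Proof.
move=> g_inj gA; rewrite -cardsXn -cardsT -(card_imset _ g_inj).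
apply: subset_leq_card; apply/fintype.subsetP => _ /imsetP[x _ ->].
by apply/setXnP => i; apply: gA.
Qed.

Lemma exchange_prod_incidence (I J : finType) (S : J -> {set I}) (F : J -> nat) :
  (\prod_(i : I) \prod_(j | i \in S j) F j = \prod_j F j ^ #|S j|)%N.
Proof.
under eq_bigr do rewrite big_mkcond.
rewrite exchange_big; apply: eq_bigr => j _.
by rewrite -big_mkcond prod_nat_const.
Qed.

Lemma psumr_eq_gt0 (R : numDomainType) (I : finType) (F G : I -> R) (i : I) :
    (forall j, 0 <= F j) -> (forall j, 0 <= G j) ->
  \sum_j F j = \sum_j G j -> 0 < F i -> exists j, 0 < G j.
Proof.
move=> F_ge0 G_ge0 eqFG Fi_gt0.
have [|j /andP[_ Gj_gt0]] := @psumr_neq0P R I predT G (fun j _ => G_ge0 j); last by exists j.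
rewrite -eqFG; apply/eqP; rewrite psumr_neq0 //.
by apply/hasP; exists i; rewrite ?mem_index_enum.
Qed.

Section UniformLaw.
Variables (R : numFieldType) (T : finType) (A : {set T}).

Definition uniform_law (x : T) : R := (x \in A)%:R / #|A|%:R.

Lemma uniform_law_ge0 x : 0 <= uniform_law x.
Proof. by rewrite divr_ge0. Qed.

Lemma uniform_law_gt0 x : 0 < uniform_law x -> x \in A.
Proof. by apply: contraTT => /negbTE xA; rewrite /uniform_law xA mul0r ltxx. Qed.

Lemma sum_uniform_law : (0 < #|A|)%N -> \sum_x uniform_law x = 1.
Proof.
move=> A_gt0; rewrite -mulr_suml.
have -> : \sum_x (x \in A)%:R = #|A|%:R :> R.
  by rewrite -sum1_card natr_sum [RHS]big_mkcond; apply: eq_bigr => x _; case: (x \in A).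
by rewrite mulfV // pnatr_eq0 -lt0n.
Qed.

End UniformLaw.

Section Converse.
Variables (R : realType) (p K N M L : nat) (S : 'I_N -> {set 'I_K}) (ZT : finType)
  (PZ : ZT -> R) (D : 'I_N -> nat)
  (ans : forall (k : 'I_K) (n : 'I_N), msgs p K L -> ZT -> 'rV['F_p]_(D n)).
Hypothesis p_prime : prime p.
Hypothesis scheme : @is_PID_scheme R p K N M L S ZT PZ D ans.

Let card_S n : #|S n| = M.
Proof. by case: scheme. Qed.

Let PZ_ge0 z : 0 <= PZ z.
Proof. by case: scheme => _ []. Qed.

Let sum_PZ : \sum_z PZ z = 1.
Proof. by case: scheme => _ [_ []]. Qed.

Let ans_local k n (W W' : msgs p K L) z :
  (forall j, j \in S n -> W j = W' j) -> ans k n W z = ans k n W' z.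
Proof. by case: scheme => _ [_ [_ [loc _]]]; apply: loc. Qed.

Let ans_decodable k : exists dec : (forall n, 'rV['F_p]_(D n)) -> 'rV['F_p]_L,
  forall W z, 0 < PZ z -> dec (fun n => ans k n W z) = W k.
Proof. by case: scheme => _ [_ [_ [_ [dec _]]]]; apply: dec. Qed.

Let ans_private := proj2 (proj2 (proj2 (proj2 (proj2 scheme)))).

Lemma exists_PZ_gt0 : exists z, 0 < PZ z.
Proof.
have [|z /andP[_ Pz]] := @psumr_neq0P R ZT predT PZ (fun z _ => PZ_ge0 z); last by exists z.
by rewrite sum_PZ; apply/eqP; rewrite oner_neq0.
Qed.

Definition answer_support k n : {set 'rV['F_p]_(D n)} :=
  [set a | [exists W, exists z, (0 < PZ z) && (ans k n W z == a)]].

Lemma answer_support_sub k k' n : answer_support k n \subset answer_support k' n.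
Proof.
apply/fintype.subsetP => a; rewrite !inE => /existsP[W /existsP[z /andP[Pz /eqP <-]]].
pose weight i (x : msgs p K L * ZT) : R := PZ x.2 / (p ^ (K * L))%:R *
  ([forall m, ans i m x.1 x.2 == ans k m W z] && (x.1 i == W k))%:R.
have weight_ge0 i x : 0 <= weight i x by rewrite mulr_ge0 ?divr_ge0.
have pKL_gt0 : 0 < (p ^ (K * L))%:R :> R by rewrite ltr0n expn_gt0 prime_gt0.
have [[W' z']] : exists x, 0 < weight k' x.
  apply: (@psumr_eq_gt0 _ _ (weight k) _ (W, z) (weight_ge0 k) (weight_ge0 k')).
    by have := ans_private k k' (fun m => ans k m W z) (W k); rewrite !pair_bigA.
  by rewrite /weight /= eqxx andbT (introT forallP (fun m => eqxx _)) mulr1 divr_gt0.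
rewrite /weight /=; case: andP => [[/forallP eq_ans _]|_]; last by rewrite mulr0 ltxx.
rewrite mulr1 pmulr_lgt0 ?invr_gt0 // => Pz'.
by apply/existsP; exists W'; apply/existsP; exists z'; rewrite Pz' eq_ans.
Qed.

Lemma card_answer_support k k' n : #|answer_support k n| = #|answer_support k' n|.
Proof. by apply/eqP; rewrite eqn_leq !subset_leq_card ?answer_support_sub. Qed.

Lemma card_answer_support_le k n : (#|answer_support k n| <= p ^ D n)%N.
Proof. by apply: leq_trans (max_card _) _; rewrite card_mx card_Fp // mul1n. Qed.

Lemma storing_answers_determine k z (W W' : msgs p K L) : 0 < PZ z ->
    (forall j, j != k -> W j = W' j) ->
    (forall n, k \in S n -> ans k n W z = ans k n W' z) ->
  W k = W' k.
Proof.
move=> Pz eq_off_k eq_storing; have [dec decP] := ans_decodable k.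
rewrite -(decP W z Pz) -(decP W' z Pz); congr dec.
apply: functional_extensionality_dep => n.
have [/eq_storing //|kNS] := boolP (k \in S n).
by apply: ans_local => j jS; apply: eq_off_k; apply: contraNneq kNS => <-.
Qed.

Lemma exp_le_prod_answer_support k :
  (p ^ L <= \prod_(n | k \in S n) #|answer_support k n|)%N.
Proof.
have [z Pz] := exists_PZ_gt0.
pose Wk w : msgs p K L := [ffun j => if j == k then w else 0].
pose A n := if k \in S n then answer_support k n else [set 0].
pose g w : {dffun forall n, 'rV['F_p]_(D n)} :=
  @finfun _ (fun n => 'rV['F_p]_(D n)) (fun n => if k \in S n then ans k n (Wk w) z else 0).
have g_inj : injective g.
  move=> w w' eq_g; have := @storing_answers_determine k z (Wk w) (Wk w') Pz.
  rewrite !ffunE eqxx; apply=> [j /negbTE jk|n kS]; first by rewrite !ffunE jk.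
  by move/ffunP: eq_g => /(_ n); rewrite !ffunE kS.
have gA w n : g w n \in A n.
  rewrite /g /A ffunE; case: ifP => _; last by rewrite inE.
  by rewrite inE; apply/existsP; exists (Wk w); apply/existsP; exists z; rewrite Pz /=.
have := leq_card_prod_inj g_inj gA.
rewrite card_mx card_Fp // mul1n => /leq_trans; apply.
apply/eq_leq; rewrite [RHS]big_mkcond; apply: eq_bigr => n _.
by rewrite /A; case: ifP; rewrite ?cards1.
Qed.

Lemma PID_converse : (K * L <= M * \sum_n D n)%N.
Proof.
have [->|K_gt0] := posnP K; first by rewrite mul0n.
pose s n := #|answer_support (Ordinal K_gt0) n|.
have : (p ^ (L * K) <= p ^ ((\sum_n D n) * M))%N.
  rewrite expnM -[K in (_ ^ K)%N]card_ord -prod_nat_const.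
  apply: (@leq_trans (\prod_n s n ^ M)).
    rewrite [X in (_ <= X)%N](eq_bigr (fun n => s n ^ #|S n|)%N) => [|n _]; last by rewrite card_S.
    rewrite -exchange_prod_incidence; apply: leq_prod => k _.
    rewrite (eq_bigr (fun n => #|answer_support k n|)) ?exp_le_prod_answer_support //.
    by move=> n _; rewrite /s (card_answer_support _ k).
  rewrite big_distrl /= expn_sum; apply: leq_prod => n _.
  have [->|M_gt0] := posnP M; first by rewrite muln0.
  by rewrite expnM leq_exp2r ?card_answer_support_le.
by rewrite leq_exp2l ?prime_gt1 // mulnC [X in (_ <= X)%N]mulnC.
Qed.

End Converse.

Lemma PID_achievable_le (R : realType) (p K N M : nat) (r : R) :
  prime p -> (0 < K)%N -> PID_achievable p K N M r -> r <= M%:R / K%:R.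
Proof.
move=> p_prime K_gt0 [L [S [ZT [PZ [D [ans [L_gt0 [scheme le_r]]]]]]]].
have KL_le := PID_converse p_prime scheme.
have sumD_gt0 : (0 < \sum_n D n)%N.
  rewrite lt0n; apply: contraTneq KL_le => ->.
  by rewrite muln0 -ltnNge muln_gt0 K_gt0.
apply: le_trans le_r _.
by rewrite ler_pdivrMr ?ltr0n // mulrAC ler_pdivlMr ?ltr0n // -!natrM ler_nat mulnC.
Qed.

Lemma divn_lt_ceildiv K M k : (0 < M)%N -> (k < K)%N -> (k %/ M < ceildiv K M)%N.
Proof. by move=> M_gt0 k_lt_K; rewrite /ceildiv leq_divRL // mulSn; have := leq_divM k M; lia. Qed.

Lemma sum_ord_ltn N c : (c <= N)%N -> (\sum_(n < N) (n < c) = c)%N.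
Proof.
move=> c_le_N; rewrite -(subnKC c_le_N) big_split_ord /=.
rewrite [X in (_ + X)%N]big1 => [|i _]; last by rewrite ltnNge leq_addr.
by rewrite addn0 (eq_bigr (fun _ => 1%N)) => [|i _]; rewrite ?sum1_card ?card_ord ?ltn_ord.
Qed.

Section Achievability.
Variables (R : realType) (p K N M : nat).
Hypotheses (M_gt0 : (0 < M)%N) (M_le_K : (M <= K)%N) (c_le_N : (ceildiv K M <= N)%N).

Local Notation c := (ceildiv K M).
Local Notation noise := {ffun 'I_N -> 'F_p}.

(* The last block is shifted left so as to end at [K]. *)
Definition block_start (n : 'I_N) : nat := minn (n * M) (K - M).

Lemma block_start_addn_lt n (t : 'I_M) : (block_start n + t < K)%N.
Proof. by have := ltn_ord t; rewrite /block_start; lia. Qed.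

Definition storage (n : 'I_N) : {set 'I_K} :=
  [set Ordinal (block_start_addn_lt n t) | t : 'I_M].

Lemma card_storage n : #|storage n| = M.
Proof.
rewrite card_imset ?card_ord // => t t' /(congr1 val) /= eq_tt'.
by apply: val_inj; apply: addnI eq_tt'.
Qed.

Definition block (k : 'I_K) : 'I_N :=
  Ordinal (leq_trans (divn_lt_ceildiv M_gt0 (ltn_ord k)) c_le_N).

Lemma block_lt_c k : (block k < c)%N.
Proof. exact: divn_lt_ceildiv. Qed.

Lemma mem_storage_block k : k \in storage (block k).
Proof.
have k_lt_K := ltn_ord k; have := leq_divM k M; have := ltn_pmod k M_gt0.
have := divn_eq k M; rewrite /block_start /=; set q := (k %/ M)%N => k_eq r_lt q_le.
have t_lt_M : (k - minn (q * M) (K - M) < M)%N by lia.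
apply/imsetP; exists (Ordinal t_lt_M) => //; apply: val_inj; rewrite /= /block_start /=; lia.
Qed.

Definition noise_sum (z : noise) : 'F_p := \sum_(n < N | (n < c)%N) z n.

Definition zero_sum_noise : {set noise} := [set z | noise_sum z == 0].

Definition noise_law : noise -> R := uniform_law R zero_sum_noise.

Definition symbols (n : 'I_N) : nat := (n < c)%N.

Definition answer (k : 'I_K) (n : 'I_N) (W : msgs p K 1) (z : noise) :
    'rV['F_p]_(symbols n) :=
  const_mx (z n + (block k == n)%:R * W k 0 0).

Lemma sum_over_symbols (x : 'I_N -> 'F_p) :
  \sum_n \sum_(j < symbols n) x n = \sum_(n < N | (n < c)%N) x n.
Proof.
rewrite [RHS]big_mkcond; apply: eq_bigr => n _.
by rewrite sumr_const card_ord /symbols; case: (n < c)%N.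
Qed.

Lemma sum_block_delta k (x : 'F_p) : \sum_(n < N | (n < c)%N) (block k == n)%:R * x = x.
Proof.
rewrite (bigD1 (block k)) ?block_lt_c //= eqxx mul1r big1 ?addr0 // => n /andP[_].
by rewrite eq_sym => /negbTE ->; rewrite mul0r.
Qed.

Lemma answer_local k n (W W' : msgs p K 1) z :
  (forall j, j \in storage n -> W j = W' j) -> answer k n W z = answer k n W' z.
Proof.
rewrite /answer; have [<- eqW|_ _] := eqVneq (block k) n; last by rewrite !mul0r.
by rewrite eqW ?mem_storage_block.
Qed.

Lemma answer_decodable k :
  exists dec : (forall n, 'rV['F_p]_(symbols n)) -> 'rV['F_p]_1,
  forall W z, 0 < noise_law z -> dec (fun n => answer k n W z) = W k.
Proof.
exists (fun a => const_mx (\sum_n \sum_(j < symbols n) a n 0 j)) => W z.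
move/uniform_law_gt0; rewrite inE => /eqP z_sum0; apply/rowP => j; rewrite ord1 !mxE.
under eq_bigr do under eq_bigr do rewrite mxE.
by rewrite sum_over_symbols big_split /= -/(noise_sum z) z_sum0 add0r sum_block_delta.
Qed.

Definition shift_pad (k k' : 'I_K) (x : msgs p K 1 * noise) : msgs p K 1 * noise :=
  ([ffun j => x.1 (tperm k k' j)],
   [ffun n => x.2 n + ((block k' == n)%:R - (block k == n)%:R) * x.1 k' 0 0]).

Lemma shift_pad_inj k k' : injective (shift_pad k k').
Proof.
move=> [W z] [W' z'] [/ffunP eqW /ffunP eqz].
have W_eq : W = W'.
  by apply/ffunP => j; have := eqW (tperm k k' j); rewrite !ffunE tpermK.
subst W'; congr pair; apply/ffunP => n.
by have := eqz n; rewrite !ffunE => /addIr.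
Qed.

Lemma noise_sum_shift_pad k k' x : noise_sum (shift_pad k k' x).2 = noise_sum x.2.
Proof.
rewrite /noise_sum; under eq_bigr do rewrite ffunE mulrBl.
by rewrite big_split sumrB /= !sum_block_delta subrr addr0.
Qed.

Lemma noise_law_shift_pad k k' x : noise_law (shift_pad k k' x).2 = noise_law x.2.
Proof. by rewrite /noise_law /uniform_law !inE noise_sum_shift_pad. Qed.

Lemma answer_shift_pad k k' n x :
  answer k n (shift_pad k k' x).1 (shift_pad k k' x).2 = answer k' n x.1 x.2.
Proof. by rewrite /answer /= !ffunE tpermL; congr const_mx; ring. Qed.

Lemma shift_pad_msg k k' x : (shift_pad k k' x).1 k = x.1 k'.
Proof. by rewrite ffunE tpermL. Qed.

Lemma PID_achievable_inv_ceildiv : PID_achievable p K N M (c%:R^-1 : R).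
Proof.
exists 1%N, storage, noise, noise_law, symbols, answer.
split=> //; split; last by rewrite /symbols sum_ord_ltn // div1r.
split; first exact: card_storage.
split; first exact: uniform_law_ge0.
split.
  apply: sum_uniform_law; apply/card_gt0P; exists 0.
  by rewrite inE /noise_sum big1 // => n _; rewrite ffunE.
split; first exact: answer_local.
split; first exact: answer_decodable.
move=> k k' a w; rewrite !pair_bigA (reindex_inj (@shift_pad_inj k k')) /=.
apply: eq_bigr => x _; rewrite noise_law_shift_pad shift_pad_msg.
by congr (_ * _%:R); congr andb; apply: eq_forallb => n; rewrite answer_shift_pad.
Qed.

End Achievability.

Theorem theorem1 (R : realType) (p K N M : nat) :
  prime p -> (0 < M)%N -> (M <= K)%N -> (ceildiv K M <= N)%N ->
  (ceildiv K M)%:R^-1 <= PID_capacity R p K N M /\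
  PID_capacity R p K N M <= M%:R / K%:R.
Proof.
move=> p_prime M_gt0 M_le_K c_le_N.
have achievable := PID_achievable_inv_ceildiv R p M_gt0 M_le_K c_le_N.
have bounded := PID_achievable_le p_prime (leq_trans M_gt0 M_le_K).
have rates_sup : has_sup [set r : R | PID_achievable p K N M r].
  by split; [exists (ceildiv K M)%:R^-1 | exists (M%:R / K%:R) => r /bounded].
split; first exact: (sup_upper_bound rates_sup achievable).
by apply: ge_sup => [|r /bounded //]; case: rates_sup.
Qed.
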